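(* Let $\lambda$ be a partition and let $H_s$ be the subgraph of $\mathrm{Skel}(\lambda)$ induced by the standard Young tableaux whose descent compositions have exactly $s$ parts. Then any cycle in $H_s$ has even length.
   Context: Words are over the ordered alphabet $\mathcal{A}_n=\{1<2<\dots<n\}$. The crystal graph $\Gamma(\mathsf{plac}_n)$ has vertex set $\mathcal{A}_n^*$ and an edge $u\to v$ labelled $i$ iff $v=\tilde f_i(u)$, where $\tilde f_i$ is the usual Kashiwara operator (replace each $i$ by $+$, each $i+1$ by $-$, delete other letters, cancel factors $-+$ repeatedly, and change the letter $i$ corresponding to the rightmost remaining $+$ into $i+1$). The quasi-crystal graph $\Gamma(\mathsf{hypo}_n)$ is the subgraph whose edges $u\to v$ labelled $i$ are those with $v=f_i(u)$, where the quasi-Kashiwara operator $f_i$ is undefined if $u$ contains a subsequence $(i+1)i$, and otherwise replaces the rightmost $i$ of $u$ by $i+1$ (undefined if there is no $i$). Each connected component of $\Gamma(\mathsf{plac}_n)$ is a union of connected components of $\Gamma(\mathsf{hypo}_n)$; a component of $\Gamma(\mathsf{plac}_n)$ consists of (words whose Schensted insertion tableaux are) the Young tableaux of a fixed shape $\lambda$, and its quasi-crystal components correspond to the minimal parsings of these tableaux; for each such minimal parsing there is a unique standard Young tableau with the same minimal parsing. The descent set of a standard Young tableau of size $N$ is the set of entries $i$ such that $i+1$ lies in a row of greater index; if it is $\{i_1<\dots<i_k\}$, the descent composition is $(i_1,i_2-i_1,\dots,N-i_k)$. The skeleton $\mathrm{Skel}(\lambda)$: let $n$ be at least the maximum length of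 a descent composition of a standard Young tableau of shape $\lambda$; take a connected component of $\Gamma(\mathsf{plac}_n)$ whose associated Young tableaux have shape $\lambda$; replace each quasi-crystal component it contains by its associated standard Young tableau, keeping, for each pair of adjacent quasi-crystal components, one oriented edge with minimal label among all edges joining them. The result is independent of $n$ and of the choice of component, and depends only on $\lambda$. *)

From Stdlib Require Import Relations.
From mathcomp Require Import all_boot.
Set Implicit Arguments. Unset Strict Implicit. Unset Printing Implicit Defensive.

Definition word := seq nat.

Definition word_over (n : nat) (w : word) : bool :=
  all (fun a => (0 < a) && (a <= n)) w.

(* Letters i become '+', letters i+1 become '-'; factors '-+' are cancelled
   repeatedly.  Scanning left to right, c counts the pending unmatched '-';
   a '+' is cancelled iff c > 0.  Returns the position of the rightmost
   remaining '+' (if any). *)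
Fixpoint unm_plus (i c pos : nat) (w : word) : option nat :=
  match w with
  | [::] => None
  | a :: w' =>
      if a == i then
        if 0 < c then unm_plus i c.-1 pos.+1 w'
        else match unm_plus i c pos.+1 w' with
             | Some p => Some p
             | None => Some pos
             end
      else if a == i.+1 then unm_plus i c.+1 pos.+1 w'
      else unm_plus i c pos.+1 w'
  end.

Definition kashiwara_f (i : nat) (w : word) : option word :=
  match unm_plus i 0 0 w with
  | Some p => Some (set_nth 0 w p i.+1)
  | None => None
  end.

(* undefined if w contains the subsequence (i+1) i or no letter i;
   otherwise the rightmost i becomes i+1 *)
Definition quasi_f (i : nat) (w : word) : option word :=
  if (i \in w) && ~~ subseq [:: i.+1; i] w
  then Some (set_nth 0 w (size w - (index i (rev w)).+1) i.+1)
  else None.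

Definition plac_edge (n : nat) (u v : word) : Prop :=
  word_over n u /\ exists i, 0 < i < n /\ kashiwara_f i u = Some v.

Definition hypo_edge (n : nat) (u v : word) : Prop :=
  word_over n u /\ exists i, 0 < i < n /\ quasi_f i u = Some v.

Definition plac_conn (n : nat) : relation word :=
  clos_refl_sym_trans word (plac_edge n).
Definition hypo_conn (n : nat) : relation word :=
  clos_refl_sym_trans word (hypo_edge n).

Definition tableau := seq (seq nat).   (* list of rows, top row first *)

Fixpoint bump_row (r : seq nat) (x : nat) : seq nat * option nat :=
  match r with
  | [::] => ([:: x], None)
  | y :: r' =>
      if x < y then (x :: r', Some y)
      else let: (r'', b) := bump_row r' x in (y :: r'', b)
  end.

Fixpoint ins_tab (t : tableau) (x : nat) : tableau :=
  match t with
  | [::] => [:: [:: x]]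
  | r :: t' =>
      let: (r', b) := bump_row r x in
      match b with
      | None => r' :: t'
      | Some y => r' :: ins_tab t' y
      end
  end.

Definition insertion (w : word) : tableau := foldl ins_tab [::] w.

Definition tab_shape (t : tableau) : seq nat := map size t.

Definition is_partition (l : seq nat) : bool :=
  sorted geq l && all (fun a => 0 < a) l.

Definition is_syt (t : tableau) : bool :=
  [&& is_partition (tab_shape t),
      all (sorted ltn) t,
      all (fun r => all (fun j => nth 0 (nth [::] t r) j < nth 0 (nth [::] t r.+1) j)
                        (iota 0 (size (nth [::] t r.+1))))
          (iota 0 (size t).-1)
    & perm_eq (flatten t) (iota 1 (size (flatten t)))].

Definition row_of (t : tableau) (k : nat) : nat := find (fun r => k \in r) t.

Definition descents (t : tableau) : seq nat :=
  [seq i <- iota 1 (size (flatten t)).-1 | row_of t i < row_of t i.+1].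

Definition desc_comp (t : tableau) : seq nat :=
  pairmap (fun a b => b - a) 0 (rcons (descents t) (size (flatten t))).

Definition std (w : word) : word :=
  [seq (count (fun q => (nth 0 w q < nth 0 w p) ||
                        ((nth 0 w q == nth 0 w p) && (q < p)))
              (iota 0 (size w))).+1 | p <- iota 0 (size w)].

(* the standard Young tableau associated with the quasi-crystal component of u
   (std commutes with insertion: this is std(P(u)), the unique SYT with the
   same minimal parsing as P(u)) *)
Definition syt_of (u : word) : tableau := insertion (std u).

(* Skeleton built from the component of Gamma(plac_n) containing w0:
   T and T' are adjacent iff they are associated with two distinct
   quasi-crystal components of that component joined by some crystal edge. *)
Definition skel_adj (n : nat) (w0 : word) (T T' : tableau) : Prop :=
  exists u v, plac_conn n w0 u /\ plac_edge n u v /\ ~ hypo_conn n u v /\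
    ((syt_of u = T /\ syt_of v = T') \/ (syt_of u = T' /\ syt_of v = T)).

(** Let maj T be the sum of the descents of a standard tableau T.  Along every
    edge of H_s the parity of maj changes, so it alternates around any cycle of
    H_s, whose length is therefore even.

    By Schensted, i is a descent of P(std u) iff i+1 occurs before i in std u,
    i.e. iff i is a descent of the inverse of std u, read as the sequence of
    positions of u sorted by (letter, position).  Let f~_i turn the letter i at
    position p into i+1.  In that sequence, p jumps from just before the block
    A ++ B to just after it, where A lists the later i's and B the earlier
    (i+1)'s; A ++ B is nonempty, since otherwise std u = std v.  The bracketing
    rule of f~_i puts an i+1 between p and each later i, and an i between each
    earlier i+1 and p; this fixes the neighbours of the block well enough that
    the jump either changes the number of descents or lowers the major index by
    exactly one.  In H_s both ends of an edge have s - 1 descents, so the second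
    case occurs. *)

From mathcomp Require Import all_boot zify ring.
Set Implicit Arguments. Unset Strict Implicit. Unset Printing Implicit Defensive.

(** * Descents and major index of sequences *)

Fixpoint ndes (s : seq nat) : nat :=
  if s is x :: (y :: _) as s' then (y < x) + ndes s' else 0.

Fixpoint maj (s : seq nat) : nat :=
  if s is x :: (y :: _) as s' then (y < x) + maj s' + ndes s' else 0.

Lemma ndes_cons2 x y s : ndes [:: x, y & s] = (y < x) + ndes (y :: s).
Proof. by []. Qed.

Lemma maj_cons2 x y s : maj [:: x, y & s] = (y < x) + maj (y :: s) + ndes (y :: s).
Proof. by []. Qed.

Definition des_set (s : seq nat) : seq nat :=
  [seq j <- iota 1 (size s).-1 | nth 0 s j < nth 0 s j.-1].

Definition join_des (s t : seq nat) : bool :=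
  [&& s != [::], t != [::] & head 0 t < last 0 s].

Lemma des_set_cons2 x y s :
  des_set [:: x, y & s] = nseq (y < x) 1 ++ map succn (des_set (y :: s)).
Proof.
rewrite /des_set /= -[2]/(1 + 1) iotaDl filter_map.
have -> : [seq j <- iota 1 (size s) | preim succn
            (fun j => nth 0 [:: x, y & s] j < nth 0 [:: x, y & s] j.-1) j]
        = [seq j <- iota 1 (size s) | nth 0 (y :: s) j < nth 0 (y :: s) j.-1].
  by apply: eq_in_filter => -[|j]; rewrite mem_iota.
by case: (y < x).
Qed.

Lemma size_des_set s : size (des_set s) = ndes s.
Proof.
elim: s => [|x [|y s] IHs] //.
by rewrite des_set_cons2 size_cat size_nseq size_map IHs.
Qed.

Lemma sumn_des_set s : sumn (des_set s) = maj s.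
Proof.
have sumn_succ (t : seq nat) : sumn (map succn t) = sumn t + size t.
  by elim: t => //= a t ->; lia.
elim: s => [|x [|y s] IHs] //.
rewrite des_set_cons2 sumn_cat sumn_succ IHs size_des_set /=.
by case: (y < x) => /=; lia.
Qed.

Lemma ndes_cat s t : ndes (s ++ t) = ndes s + join_des s t + ndes t.
Proof.
elim: s => [|x [|y s] IHs] //; first by case: t {IHs}.
by rewrite !cat_cons !ndes_cons2 -cat_cons IHs /join_des /=; lia.
Qed.

Lemma maj_cat s t :
  maj (s ++ t) = maj s + size s * join_des s t + maj t + size s * ndes t.
Proof.
elim: s => [|x [|y s] IHs]; first by rewrite /= !mul0n addn0.
  by case: t {IHs} => [|z t] //=; rewrite /join_des /=; lia.
by rewrite !cat_cons !maj_cons2 -cat_cons IHs ndes_cat /join_des /=; nia.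
Qed.

Lemma ndes_maj_sorted s : sorted ltn s -> ndes s = 0 /\ maj s = 0.
Proof.
elim: s => [|x [|y s] IHs] // /andP [xy /IHs [ndes0 maj0]].
by rewrite ndes_cons2 maj_cons2 ndes0 maj0 ltnNge ltnW.
Qed.

Lemma sorted_head_leq (s : seq nat) x : sorted ltn s -> x \in s -> head 0 s <= x.
Proof.
case: s => [|a s] //= sorted_s; rewrite in_cons => /predU1P [-> //|xs].
exact/ltnW/(allP (order_path_min ltn_trans sorted_s)).
Qed.

Lemma sorted_last_geq (s : seq nat) x : sorted ltn s -> x \in s -> x <= last 0 s.
Proof.
move=> /(sub_sorted ltnW) sorted_s xs; rewrite -(nth_index 0 xs) -nth_last.
have s0 : 0 < size s by case: (s) xs.
apply: (sorted_leq_nth leq_trans leqnn) => //; rewrite ?inE ?index_mem ?prednK //.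
by rewrite -ltnS prednK // index_mem.
Qed.

Lemma join_des_catr s t u : t != [::] -> join_des s (t ++ u) = join_des s t.
Proof. by case: t. Qed.

Lemma ndes_splice L M R : M != [::] ->
  ndes (L ++ M ++ R) = ndes L + ndes R + (join_des L M + ndes M + join_des M R).
Proof. by move=> nzM; rewrite !ndes_cat join_des_catr //; ring. Qed.

Lemma maj_splice L M R : M != [::] ->
  maj (L ++ M ++ R) = maj L + maj R + size M * ndes R +
    size L * (join_des L M + ndes M + join_des M R + ndes R) +
    (maj M + size M * join_des M R).
Proof. by move=> nzM; rewrite !maj_cat ndes_cat join_des_catr //; ring. Qed.

Lemma maj_shift_window L p A B R :
  sorted ltn A -> sorted ltn B -> all (fun a => p < a) A -> all (fun b => b < p) B ->
  (A != [::] -> [/\ R != [::], p < head 0 R & head 0 R < head 0 A]) ->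
  (B != [::] -> [/\ L != [::], head 0 B < last 0 L & last 0 L < p]) ->
  A ++ B != [::] ->
  ndes (L ++ (p :: A ++ B) ++ R) = ndes (L ++ (A ++ B ++ [:: p]) ++ R) ->
  maj (L ++ (p :: A ++ B) ++ R) = (maj (L ++ (A ++ B ++ [:: p]) ++ R)).+1.
Proof.
move=> sA sB pA pB hA hB nzAB.
have nzM' : A ++ B ++ [:: p] != [::] by rewrite catA; case: (A ++ B).
rewrite !(ndes_splice L) // => /addnI ndesM.
have sizeM : size (p :: A ++ B) = size (A ++ B ++ [:: p]) by rewrite /= !size_cat addn1 addnS.
rewrite !(maj_splice L) // ndesM sizeM -addnS; congr (_ + _).
move: ndesM; rewrite catA -cat1s !maj_cat !ndes_cat.
have [-> ->] := ndes_maj_sorted sA; have [-> ->] := ndes_maj_sorted sB.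
rewrite /join_des !size_cat /= !muln0 !add0n !addn0.
clear nzM' sizeM; case: A sA pA hA nzAB => [|a A] sA pA hA;
  case: B sB pB hB => [|b B] sB pB hB //= _; rewrite ?cats0 !last_cat /=.
- have [nzL bL Lp] := hB isT; have Bp := allP pB _ (mem_last b B).
  rewrite nzL (bL : b < last 0 L) (ltn_trans bL Lp) (leq_gtF (ltnW Lp)).
  rewrite (leq_gtF (ltnW Bp)) /=.
  by case: (_ && _); case: (_ && _) => /=; lia.
- have [nzR pR Ra] := hA isT; have pa := allP pA _ (mem_head a A).
  have aA : a <= last a A := sorted_last_geq sA (mem_head a A).
  rewrite nzR (leq_gtF (ltnW pa)) (leq_trans pa aA) (leq_trans Ra aA) (leq_gtF (ltnW pR)).
  lia.
- have [nzR pR Ra] := hA isT; have pa := allP pA _ (mem_head a A).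
  have [nzL bL Lp] := hB isT; have Bp := allP pB _ (mem_last b B).
  have aA : a <= last a A := sorted_last_geq sA (mem_head a A).
  rewrite nzL nzR (leq_gtF (ltnW Lp)) (leq_gtF (ltnW pa)).
  rewrite (leq_gtF (ltnW (ltn_trans Lp pa))) (leq_gtF (ltnW pR)) (leq_gtF (ltnW Bp)).
  rewrite (leq_gtF (ltnW (ltn_trans Bp pR))) (ltn_trans (ltn_trans bL Lp) (leq_trans pa aA)).
  lia.
Qed.

(** * Row insertion and descents of insertion tableaux *)

Variant bump_row_spec (r : seq nat) (x : nat) : seq nat * option nat -> Prop :=
  | BumpAppend of all (fun z => z <= x) r :
      bump_row_spec r x (rcons r x, None)
  | BumpReplace r1 y r2 of r = r1 ++ y :: r2 & x < y & all (fun z => z <= x) r1 :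
      bump_row_spec r x (r1 ++ x :: r2, Some y).

Lemma bump_rowP r x : bump_row_spec r x (bump_row r x).
Proof.
elim: r => [|z r IHr] /=; first exact: BumpAppend.
case: ifP => [xz | zx]; first exact: (@BumpReplace _ _ [::]).
have zx' : z <= x by rewrite leqNgt zx.
case: IHr => [r_x | r1 y r2 -> xy r1x].
  by apply: BumpAppend; rewrite /= zx'.
by apply: (@BumpReplace _ _ (z :: r1)); rewrite //= zx'.
Qed.

Lemma ins_tab_cons r t x : ins_tab (r :: t) x =
  let: (r', b) := bump_row r x in
  if b is Some y then r' :: ins_tab t y else r' :: t.
Proof. by []. Qed.

Lemma perm_ins_tab t x : perm_eq (flatten (ins_tab t x)) (x :: flatten t).
Proof.
elim: t x => [|r t IHt] x //; rewrite ins_tab_cons.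
case: bump_rowP => [_ | r1 y r2 -> _ _] /=.
  by rewrite -cats1 -catA (perm_catCA r [:: x]).
apply: perm_trans (perm_cat (perm_refl _) (IHt y)) _.
by rewrite -!catA (perm_catCA r1 [:: x]) perm_cons perm_cat2l -cat1s perm_catCA.
Qed.

Lemma sorted_leq_rcons r x :
  sorted leq r -> all (fun z => z <= x) r -> sorted leq (rcons r x).
Proof.
case: r => [|a r] // sr rx.
by rewrite /= rcons_path (sr : path leq a r) (allP rx _ (mem_last a r)).
Qed.

Lemma sorted_leq_replace r1 y r2 x : sorted leq (r1 ++ y :: r2) -> x < y ->
  all (fun z => z <= x) r1 -> sorted leq (r1 ++ x :: r2).
Proof.
move=> sr xy r1x; have [s1 _] := cat_sorted2 sr.
move: sr; rewrite !sorted_cat_cons (@sorted_leq_rcons r1 x) // => /andP [_].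
by case: r2 => //= z r2 /andP [yz ->]; rewrite andbT (leq_trans (ltnW xy)).
Qed.

Lemma ins_tab_sorted t x : all (sorted leq) t -> all (sorted leq) (ins_tab t x).
Proof.
elim: t x => [|r t IHt] x //; rewrite [all _ (r :: t)]/= => /andP [sr st].
rewrite ins_tab_cons.
case: bump_rowP => [rx | r1 y r2 Er xy r1x] /=.
  by rewrite st sorted_leq_rcons.
by rewrite IHt // andbT (sorted_leq_replace _ xy r1x) // -Er.
Qed.

Lemma insertion_inv w :
  perm_eq (flatten (insertion w)) w /\ all (sorted leq) (insertion w).
Proof.
elim/last_ind: w => [|w x [perm_w sorted_w]] //.
rewrite /insertion foldl_rcons -/(insertion w) ins_tab_sorted //; split => //.
by rewrite (perm_trans (perm_ins_tab _ _)) // perm_sym perm_rcons perm_cons perm_sym.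
Qed.

Definition row_des (t : tableau) (j : nat) : bool := row_of t j < row_of t j.+1.

Lemma row_of_cons r t k : row_of (r :: t) k = if k \in r then 0 else (row_of t k).+1.
Proof. by rewrite /row_of /=; case: ifP. Qed.

Lemma row_des_cons r t j :
  row_des (r :: t) j = (j.+1 \notin r) && ((j \in r) || row_des t j).
Proof. by rewrite /row_des !row_of_cons; case: (j \in r); case: (j.+1 \in r). Qed.

Lemma row_of_ins_tab_new t x : row_of (ins_tab t x) x = 0.
Proof.
case: t => [|r t]; first by rewrite /row_of /= mem_seq1 eqxx.
rewrite ins_tab_cons; case: bump_rowP => [_ | r1 y r2 _ _ _];
  by rewrite row_of_cons ?mem_rcons ?mem_cat mem_head ?orbT.
Qed.

Lemma row_of_ins_tab_lt t x z : z < x -> z \in flatten t ->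
  row_of (ins_tab t x) z = row_of t z.
Proof.
elim: t x => [|r t IHt] x // zx; rewrite ins_tab_cons [flatten _]/= mem_cat.
case: bump_rowP => [_ | r1 y r2 -> xy _];
  rewrite !row_of_cons ?mem_rcons ?mem_cat !in_cons (ltn_eqF zx) ?(ltn_eqF (ltn_trans zx xy)) //=.
case: ifP => //= _ zt; rewrite IHt //; exact: ltn_trans xy.
Qed.

Lemma sorted_uniq_cat_cons_gt r1 y r2 k :
  sorted leq (r1 ++ y :: r2) -> uniq (r1 ++ y :: r2) -> k \in r2 -> y < k.
Proof.
rewrite sorted_cat_cons cat_uniq => /andP [_ yr2] /and3P [_ _ /andP [y_r2 _]] kr2.
rewrite ltn_neqAle (allP (order_path_min leq_trans yr2)) // andbT.
by apply: contraNneq y_r2 => ->.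
Qed.

Lemma row_des_ins_tab_new t j : all (sorted leq) t -> uniq (flatten t) ->
  j.+1 \in flatten t -> row_des (ins_tab t j) j.
Proof.
case: t => [|r t'] // /andP [sr _] ur _; rewrite ins_tab_cons.
case: bump_rowP => [rj | r1 y r2 Er jy r1j]; rewrite row_des_cons.
  rewrite !mem_rcons mem_head andbT in_cons (gtn_eqF (ltnSn j)) /=.
  by apply/negP => /(allP rj); rewrite ltnn.
rewrite !mem_cat !in_cons eqxx orbT andbT (gtn_eqF (ltnSn j)) /= negb_or.
have ur' : uniq (r1 ++ y :: r2) by rewrite -Er; move: ur; rewrite cat_uniq => /andP [].
apply/andP; split; first by apply/negP => /(allP r1j); rewrite ltnn.
apply/negP => /(sorted_uniq_cat_cons_gt _ ur'); rewrite -Er => /(_ sr).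
by rewrite ltnS leqNgt jy.
Qed.

Lemma row_des_ins_tab_lt t x j : x < j -> all (sorted leq) t -> uniq (flatten t) ->
  j \in flatten t -> j.+1 \in flatten t ->
  row_des (ins_tab t x) j = row_des t j.
Proof.
elim: t x => [|r t IHt] x // xj; rewrite [all _ (r :: t)]/= => /andP [sr st] urt.
rewrite ins_tab_cons [flatten _]/= !mem_cat.
have [ur ut] : uniq r /\ uniq (flatten t) by move: urt; rewrite cat_uniq => /and3P [].
case: bump_rowP => [_ | r1 y r2 Er xy r1x]; rewrite !row_des_cons.
  by rewrite !mem_rcons !in_cons (gtn_eqF xj) (gtn_eqF (leqW xj)).
have r1j k : j <= k -> k \notin r1.
  by move=> jk; apply/negP => /(allP r1x); rewrite leqNgt (leq_trans xj jk).
have r2y k : k \in r2 -> y < k by apply: (@sorted_uniq_cat_cons_gt r1); rewrite -Er.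
rewrite Er !mem_cat !in_cons (negbTE (r1j _ (leqnn j))) (negbTE (r1j _ (leqnSn j))).
rewrite (gtn_eqF xj) (gtn_eqF (leqW xj)) !orFb.
case: (ltngtP y j) => [yj | jy | <-].
- rewrite (gtn_eqF (leqW yj)) !orFb.
  case: (j.+1 \in r2) => //=; case: (j \in r2) => //= jt bt.
  by rewrite IHt.
- have r2j k : k <= y -> k \notin r2 by move=> ky; apply/negP => /r2y; rewrite ltnNge ky.
  rewrite (negbTE (r2j _ (ltnW jy))) !orFb.
  case: (ltngtP j.+1 y) => [by_ | yb | <-]; last 2 first.
  + by move: jy; rewrite ltnNge -ltnS yb.
  + by move=> _ _; rewrite /row_des row_of_ins_tab_new ltn0 andbF.
  rewrite (negbTE (r2j _ (ltnW by_))) !orFb => jt bt.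
  by rewrite /row_des !row_of_ins_tab_lt // ltnW.
- have yr2 : y \notin r2 by apply/negP => /r2y; rewrite ltnn.
  rewrite (gtn_eqF (ltnSn y)) (negbTE yr2) !orFb andbT.
  case: (y.+1 \in r2) => //= _ bt.
  exact: row_des_ins_tab_new.
Qed.

Lemma row_des_insertion w j : uniq w -> j \in w -> j.+1 \in w ->
  row_des (insertion w) j = (index j.+1 w < index j w).
Proof.
elim/last_ind: w => [|w x IHw] //; rewrite rcons_uniq => /andP [xw uw].
have [perm_w sorted_w] := insertion_inv w.
have memP k : (k \in flatten (insertion w)) = (k \in w) := perm_mem perm_w k.
have uniqP : uniq (flatten (insertion w)) by rewrite (perm_uniq perm_w).
rewrite /insertion foldl_rcons -/(insertion w) -!cats1 !index_cat !mem_cat !mem_seq1.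
case: (ltngtP x j) xw => [xj | jx | ->] xw.
- rewrite (gtn_eqF (leqW xj)) !orbF => jw bw.
  by rewrite jw bw -IHw // row_des_ins_tab_lt // memP.
- case: (ltngtP x j.+1) xw => [xb | bx | ->] xw.
  + by move: jx; rewrite ltnNge -ltnS xb.
  + rewrite !orbF => jw bw.
    by rewrite jw bw -IHw // /row_des !row_of_ins_tab_lt ?memP // ltnW.
  + rewrite orbF => jw _; rewrite jw (negbTE xw) index_head addn0.
    rewrite /row_des row_of_ins_tab_new ltn0.
    by apply/esym/negbTE; rewrite -leqNgt ltnW // index_mem.
- rewrite (gtn_eqF (ltnSn j)) orbF => _ bw.
  rewrite bw (negbTE xw) index_head addn0 index_mem bw.
  by apply: row_des_ins_tab_new; rewrite ?memP.
Qed.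

(** * Standardization *)

Definition std_key (w : word) (q r : nat) : bool :=
  (nth 0 w q < nth 0 w r) || (nth 0 w q == nth 0 w r) && (q < r).

Lemma std_key_trans w : transitive (std_key w).
Proof.
move=> r q s; rewrite /std_key.
case/orP => [qr | /andP [/eqP qr1 qr2]]; case/orP => [rs | /andP [/eqP rs1 rs2]].
- by rewrite (ltn_trans qr rs).
- by rewrite -rs1 qr.
- by rewrite qr1 rs.
- by rewrite qr1 rs1 eqxx (ltn_trans qr2 rs2) orbT.
Qed.

Lemma std_key_irr w q : std_key w q q = false.
Proof. by rewrite /std_key !ltnn andbF. Qed.

Definition occ (w : word) (c : nat) : seq nat :=
  [seq q <- iota 0 (size w) | nth 0 w q == c].

Definition std_inv (w : word) (K : nat) : seq nat :=
  flatten [seq occ w c | c <- iota 0 K].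

Lemma std_invS w K : std_inv w K.+1 = std_inv w K ++ occ w K.
Proof. by rewrite /std_inv -addn1 iotaD map_cat flatten_cat /= cats0. Qed.

Lemma perm_filter_ltnS (f : nat -> nat) K (s : seq nat) :
  perm_eq [seq q <- s | f q < K.+1] ([seq q <- s | f q < K] ++ [seq q <- s | f q == K]).
Proof.
elim: s => [|x s IHs] //=; case: (ltngtP (f x) K) => fxK /=.
- by rewrite ltnS (ltnW fxK) perm_cons.
- by rewrite ltnS leqNgt fxK.
- by rewrite fxK ltnSn perm_sym (perm_catCA _ [:: x]) /= perm_cons perm_sym.
Qed.

Lemma perm_std_inv_filter w K :
  perm_eq (std_inv w K) [seq q <- iota 0 (size w) | nth 0 w q < K].
Proof.
elim: K => [|K IHK]; first by rewrite /std_inv /= (eq_filter (a2 := pred0)) ?filter_pred0.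
rewrite std_invS perm_sym (perm_trans (perm_filter_ltnS _ _ _)) //.
by rewrite perm_cat2r perm_sym.
Qed.

Lemma mem_std_inv w K q : q \in std_inv w K -> nth 0 w q < K.
Proof. by rewrite (perm_mem (perm_std_inv_filter w K)) mem_filter => /andP []. Qed.

Lemma std_inv_sorted w K : sorted (std_key w) (std_inv w K).
Proof.
have occ_sorted c : sorted (std_key w) (occ w c).
  apply: (@sub_in_sorted _ (fun q => nth 0 w q == c) ltn); last 2 first.
  - exact: filter_all.
  - by apply: sorted_filter; [exact: ltn_trans | exact: iota_ltn_sorted].
  by move=> q r /[!unfold_in] /eqP qc /eqP rc qr; rewrite /std_key qc rc eqxx (qr : q < r) orbT.
elim: K => [|K IHK] //; rewrite std_invS.
case E: (std_inv w K) IHK => [|a s] IHK; first exact: occ_sorted.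
rewrite /= cat_path (IHK : path _ a s) /=; case F: (occ w K) (occ_sorted K) => [|b t] //= ->.
have : b \in occ w K by rewrite F mem_head.
rewrite mem_filter => /andP [/eqP bK _].
by rewrite andbT /std_key bK (mem_std_inv (_ : last a s \in _)) // E mem_last.
Qed.

Lemma sorted_count_lt_nth (T : Type) (lt : rel T) (s : seq T) x0 k :
  transitive lt -> irreflexive lt -> sorted lt s -> k < size s ->
  count (lt^~ (nth x0 s k)) s = k.
Proof.
move=> lt_trans lt_irr sorted_s ks.
rewrite -[X in count _ X](mkseq_nth x0 s) /mkseq count_map.
rewrite (@eq_in_count _ _ (gtn k)) => [|j]; last first.
  rewrite mem_iota add0n /= => js; case: (ltngtP j k) => [jk | kj | ->].
  - exact: (sorted_ltn_nth lt_trans x0 sorted_s j k js ks jk).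
  - apply/negP => /(lt_trans _ _ _ (sorted_ltn_nth lt_trans x0 sorted_s k j ks js kj)).
    by rewrite lt_irr.
  - exact: lt_irr.
rewrite -(subnKC (ltnW ks)) iotaD count_cat add0n.
rewrite (@eq_in_count _ _ predT) => [|j]; last by rewrite mem_iota add0n.
rewrite [X in _ + X](@eq_in_count _ _ pred0) => [|j]; last first.
  by rewrite mem_iota => /andP [kj _]; rewrite /= ltnNge kj.
by rewrite count_predT count_pred0 size_iota addn0.
Qed.

Lemma size_std w : size (std w) = size w.
Proof. by rewrite size_map size_iota. Qed.

Section StandardizationInverse.

Variables (w : word) (K : nat).
Hypothesis w_ltK : all (fun a => a < K) w.

Lemma perm_std_inv : perm_eq (std_inv w K) (iota 0 (size w)).
Proof.
apply: perm_trans (perm_std_inv_filter w K) _.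
rewrite (@eq_in_filter _ _ predT) ?filter_predT // => q.
by rewrite mem_iota => /andP [_ /(all_nthP 0 w_ltK)].
Qed.

Lemma size_std_inv : size (std_inv w K) = size w.
Proof. by rewrite (perm_size perm_std_inv) size_iota. Qed.

Lemma nth_std_inv_lt k : k < size w -> nth 0 (std_inv w K) k < size w.
Proof.
move=> kw; suff : nth 0 (std_inv w K) k \in iota 0 (size w) by rewrite mem_iota.
by rewrite -(perm_mem perm_std_inv) mem_nth // size_std_inv.
Qed.

Lemma nth_std_std_inv k : k < size w -> nth 0 (std w) (nth 0 (std_inv w K) k) = k.+1.
Proof.
move=> kw; rewrite (nth_map 0) ?size_iota ?nth_std_inv_lt // nth_iota ?nth_std_inv_lt //.
rewrite add0n -(permP perm_std_inv); congr _.+1.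
apply: (sorted_count_lt_nth _ (@std_key_trans w) (@std_key_irr w) (std_inv_sorted w K)).
by rewrite size_std_inv.
Qed.

Lemma mem_std k : k < size w -> k.+1 \in std w.
Proof.
by move=> kw; rewrite -(nth_std_std_inv kw) mem_nth // size_std nth_std_inv_lt.
Qed.

Lemma std_uniq : uniq (std w).
Proof.
apply: (@leq_size_uniq _ (iota 1 (size w))); rewrite ?iota_uniq ?size_std ?size_iota //.
by case=> [|k]; rewrite mem_iota //= add1n ltnS => /mem_std.
Qed.

Lemma index_std k : k < size w -> index k.+1 (std w) = nth 0 (std_inv w K) k.
Proof.
move=> kw; rewrite -(nth_std_std_inv kw) index_uniq ?std_uniq //.
by rewrite size_std nth_std_inv_lt.
Qed.

Lemma descents_syt_of : descents (syt_of w) = des_set (std_inv w K).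
Proof.
have [perm_std _] := insertion_inv (std w).
rewrite /descents /syt_of /des_set (perm_size perm_std) size_std size_std_inv.
apply: eq_in_filter => -[|j]; rewrite mem_iota // add1n !ltnS ltn_predRL => /andP [_ jw].
rewrite -/(row_des _ _) row_des_insertion ?std_uniq ?mem_std //; last exact: ltnW.
by rewrite !index_std // ltnW.
Qed.

End StandardizationInverse.

Lemma std_inv_inj u v K : size u = size v ->
  all (fun a => a < K) u -> all (fun a => a < K) v ->
  std_inv u K = std_inv v K -> std u = std v.
Proof.
move=> size_uv uK vK std_inv_uv.
apply: (@eq_from_nth _ 0); rewrite ?size_std // => q qu.
have qinv : q \in std_inv u K by rewrite (perm_mem (perm_std_inv uK)) mem_iota.
have kw : index q (std_inv u K) < size u by rewrite -(size_std_inv uK) index_mem.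
rewrite -(nth_index 0 qinv); move: kw; set k := index q _ => kw.
by rewrite (nth_std_std_inv uK kw) std_inv_uv nth_std_std_inv // -size_uv.
Qed.

(** * Bracketing of the Kashiwara operator *)

Section Bracketing.

Variable i : nat.

Local Notation unm c w := (unm_plus i c 0 w).

Lemma unm_plus_shift c pos w : unm_plus i c pos w = omap (addn pos) (unm c w).
Proof.
elim: w c pos => [|a w IHw] c pos //=.
rewrite !(IHw _ pos.+1) !(IHw _ 1).
by case: ifP => _; [case: ifP => _ | case: ifP => _]; case: (unm_plus i _ 0 w) => //= *;
  rewrite ?addn0 ?addnS.
Qed.

Lemma unm_cons c a w : unm c (a :: w) =
  if a == i then
    if 0 < c then omap succn (unm c.-1 w)
    else Some (if unm c w is Some p then p.+1 else 0)
  else if a == i.+1 then omap succn (unm c.+1 w) else omap succn (unm c w).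
Proof.
rewrite /= !(unm_plus_shift _ 1).
by case: ifP => _; [case: ifP => _ | case: ifP => _]; case: (unm _ w).
Qed.

Lemma unm_some c w r : unm c w = Some r -> r < size w /\ nth 0 w r = i.
Proof.
elim: w c r => [|a w IHw] c r //; rewrite unm_cons.
have shift c' : omap succn (unm c' w) = Some r -> r < size (a :: w) /\ nth 0 (a :: w) r = i.
  by case E: (unm c' w) => [p|] // [<-]; have [] := IHw _ _ E.
case: eqP => [ai | _]; last by case: ifP => _; apply: shift.
case: ifP => _; first exact: shift.
by case E: (unm c w) => [p|] Er; [apply: (shift c); rewrite E | case: Er => <-; rewrite ai].
Qed.

Lemma unm_none c w : unm c w = None -> forall q, q < size w -> nth 0 w q = i ->
  0 < c \/ exists2 q', q' < q & nth 0 w q' = i.+1.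
Proof.
elim: w c => [|a w IHw] c //; rewrite unm_cons.
case: eqP => [-> | ai]; first by case: ifP => [c0 _ | _]; [left | case: (unm c w)].
case: ifP => [/eqP ai1 | _] wN [|q] //=; try by move=> _ /ai.
  by move=> _ _; right; exists 0.
case E: (unm c w) wN => //= _ qw wq.
by case: (IHw _ E q qw wq) => [|[q' q'q wq']]; [left | right; exists q'.+1].
Qed.

Lemma unm_after c w r : unm c w = Some r ->
  forall q, r < q < size w -> nth 0 w q = i -> exists2 q', r < q' < q & nth 0 w q' = i.+1.
Proof.
elim: w c r => [|a w IHw] c r //; rewrite unm_cons.
have shift c' : omap succn (unm c' w) = Some r -> forall q, r < q < size (a :: w) ->
    nth 0 (a :: w) q = i -> exists2 q', r < q' < q & nth 0 (a :: w) q' = i.+1.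
  case E: (unm c' w) => [p|] // [<-] [|q] //= rqw wq.
  by have [q' pq'q wq'] := IHw _ _ E q rqw wq; exists q'.+1.
case: eqP => [_ | _]; last by case: ifP => _; apply: shift.
case: ifP => [_ | c0]; first exact: shift.
case E: (unm c w) => [p|] Er; first by apply: (shift c); rewrite E.
case: Er => <- [|q] // /andP [_ qw] wq.
by case: (unm_none E qw wq) => [|[q' q'q wq']]; [rewrite c0 | exists q'.+1].
Qed.

Lemma unm_pending c w r : unm c w = Some r -> 0 < c -> exists2 q, q < r & nth 0 w q = i.
Proof.
elim: w c r => [|a w IHw] c r //; rewrite unm_cons.
case: eqP => [-> | _]; first case: ifP => // _.
  by case: (unm c.-1 w) => //= p [<-]; exists 0.
case: ifP => _; case E: (unm _ w) => [p|] //= [<-] c0.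
  by have [q qp wq] := IHw _ _ E isT; exists q.+1.
by have [q qp wq] := IHw _ _ E c0; exists q.+1.
Qed.

Lemma unm_before c w r : unm c w = Some r ->
  forall q, q < r -> nth 0 w q = i.+1 -> exists2 q', q < q' < r & nth 0 w q' = i.
Proof.
elim: w c r => [|a w IHw] c r //; rewrite unm_cons.
have shift c' : omap succn (unm c' w) = Some r -> forall q, 0 < q < r ->
    nth 0 (a :: w) q = i.+1 -> exists2 q', q < q' < r & nth 0 (a :: w) q' = i.
  case E: (unm c' w) => [p|] // [<-] [|q] //= qp wq.
  by have [q' qq'p wq'] := IHw _ _ E q qp wq; exists q'.+1.
case: (eqVneq a i.+1) => [ai1 | ai1].
  have -> : (a == i) = false by rewrite ai1 (gtn_eqF (ltnSn i)).
  move=> Er [|q] rq; last exact: (shift _ Er q.+1 rq).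
  case E: (unm c.+1 w) Er => [p|] //= [<-] _.
  by have [q' q'p wq'] := unm_pending E isT; exists q'.+1.
have {}shift c' : omap succn (unm c' w) = Some r -> forall q, q < r ->
    nth 0 (a :: w) q = i.+1 -> exists2 q', q < q' < r & nth 0 (a :: w) q' = i.
  move=> Er [|q] qr wq; last exact: (shift c' Er q.+1 qr wq).
  by rewrite -wq eqxx in ai1.
case: eqP => [_ | _]; last exact: shift.
case: ifP => _; first exact: shift.
case E: (unm c w) => [p|] Er; first by apply: (shift c); rewrite E.
by case: Er => <-.
Qed.

End Bracketing.

(** * Raising one letter *)

Lemma std_inv_split w K i : i.+2 <= K ->
  std_inv w K = std_inv w i ++ occ w i ++ occ w i.+1 ++
                flatten [seq occ w c | c <- iota i.+2 (K - i.+2)].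
Proof.
move=> iK; rewrite /std_inv -{1}(subnKC iK) iotaD map_cat flatten_cat add0n.
by rewrite -{1}addn2 iotaD map_cat flatten_cat /= add0n cats0 -!catA.
Qed.

Definition occ_before (w : word) (p c : nat) : seq nat :=
  [seq q <- iota 0 p | nth 0 w q == c].

Definition occ_after (w : word) (p c : nat) : seq nat :=
  [seq q <- iota p.+1 (size w - p.+1) | nth 0 w q == c].

Lemma mem_occ_before w p c q : (q \in occ_before w p c) = (q < p) && (nth 0 w q == c).
Proof. by rewrite mem_filter mem_iota andbC. Qed.

Lemma mem_occ_after w p c q :
  (q \in occ_after w p c) = [&& p < q, q < size w & nth 0 w q == c].
Proof.
rewrite mem_filter mem_iota andbC; case: (ltnP p q) => //= pq.
by congr (_ && _); apply/idP/idP => ?; lia.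
Qed.

Lemma occ_before_sorted w p c : sorted ltn (occ_before w p c).
Proof. exact: (sorted_filter ltn_trans _ (iota_ltn_sorted _ _)). Qed.

Lemma occ_after_sorted w p c : sorted ltn (occ_after w p c).
Proof. exact: (sorted_filter ltn_trans _ (iota_ltn_sorted _ _)). Qed.

Lemma occ_split w p c : p < size w ->
  occ w c = occ_before w p c ++ nseq (nth 0 w p == c) p ++ occ_after w p c.
Proof.
move=> pw; rewrite /occ -{1}(subnKC (ltnW pw)) iotaD filter_cat add0n -(subnSK pw) /=.
by case: (_ == c).
Qed.

Section RaiseLetter.

Variables (u : word) (p i : nat).
Hypotheses (pu : p < size u) (up : nth 0 u p = i).

Let v := set_nth 0 u p i.+1.
Let L := std_inv u i ++ occ_before u p i.
Let A := occ_after u p i.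
Let B := occ_before u p i.+1.
Let C := occ_after u p i.+1.

Lemma size_raise : size v = size u.
Proof. by rewrite size_set_nth; apply/maxn_idPr. Qed.

Lemma nth_raise q : nth 0 v q = if q == p then i.+1 else nth 0 u q.
Proof. exact: nth_set_nth. Qed.

Lemma all_raise K : all (fun a => a < K) u -> i.+1 < K -> all (fun a => a < K) v.
Proof.
move=> uK iK; apply/(all_nthP 0) => q; rewrite size_raise nth_raise => qu.
by case: eqP => // _; exact: (all_nthP 0 uK).
Qed.

Lemma occ_before_raise c : occ_before v p c = occ_before u p c.
Proof.
by apply: eq_in_filter => q; rewrite mem_iota nth_raise => /andP [_ /ltn_eqF ->].
Qed.

Lemma occ_after_raise c : occ_after v p c = occ_after u p c.
Proof.
rewrite /occ_after size_raise; apply: eq_in_filter => q.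
by rewrite mem_iota nth_raise => /andP [/gtn_eqF ->].
Qed.

Lemma std_inv_raise K : i.+2 <= K ->
  exists Z, std_inv u K = L ++ (p :: A ++ B) ++ (C ++ Z) /\
            std_inv v K = L ++ (A ++ B ++ [:: p]) ++ (C ++ Z).
Proof.
move=> iK; have pv : p < size v by rewrite size_raise.
have occ_other c : c != i -> c != i.+1 -> occ v c = occ u c.
  move=> ci ci1; rewrite (occ_split c pu) (occ_split c pv) occ_before_raise occ_after_raise.
  by rewrite nth_raise eqxx up eq_sym (negbTE ci1) eq_sym (negbTE ci).
have occ_high : flatten [seq occ v c | c <- iota i.+2 (K - i.+2)] =
                flatten [seq occ u c | c <- iota i.+2 (K - i.+2)].
  congr flatten; apply/eq_in_map => c; rewrite mem_iota => /andP [ic _].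
  by rewrite occ_other // gtn_eqF // ltnW.
have occ_low : std_inv v i = std_inv u i.
  congr flatten; apply/eq_in_map => c; rewrite mem_iota /= => ci.
  by rewrite occ_other // ltn_eqF // (ltn_trans ci).
exists (flatten [seq occ u c | c <- iota i.+2 (K - i.+2)]).
rewrite !(std_inv_split _ iK) occ_high occ_low (occ_split i pu) (occ_split i.+1 pu).
rewrite (occ_split i pv) (occ_split i.+1 pv) !occ_before_raise !occ_after_raise !nth_raise.
rewrite eqxx up !eqxx (ltn_eqF (ltnSn i)) (gtn_eqF (ltnSn i)) /L /A /B /C /= -!catA.
by split.
Qed.

End RaiseLetter.

Section Bracketed.

Variables (i : nat) (u : word) (p : nat).
Hypothesis unm_p : unm_plus i 0 0 u = Some p.

Lemma occ_after_bracketed : occ_after u p i != [::] ->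
  [/\ occ_after u p i.+1 != [::], p < head 0 (occ_after u p i.+1)
    & head 0 (occ_after u p i.+1) < head 0 (occ_after u p i)].
Proof.
case E: (occ_after u p i) => [//|a A] _ /=.
have : a \in occ_after u p i by rewrite E mem_head.
rewrite mem_occ_after => /and3P [pa au /eqP ua].
have [q /andP [pq qa] uq] := unm_after unm_p (introT andP (conj pa au)) ua.
have qC : q \in occ_after u p i.+1 by rewrite mem_occ_after pq uq eqxx (ltn_trans qa).
case F: (occ_after u p i.+1) qC => [//|b C] qC; split => //.
  by move: (mem_head b C); rewrite -{1}F mem_occ_after => /and3P [].
by rewrite (leq_ltn_trans _ qa) // -F (sorted_head_leq (occ_after_sorted _ _ _)) // F.
Qed.

Lemma occ_before_bracketed : occ_before u p i.+1 != [::] ->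
  [/\ occ_before u p i != [::], head 0 (occ_before u p i.+1) < last 0 (occ_before u p i)
    & last 0 (occ_before u p i) < p].
Proof.
case E: (occ_before u p i.+1) => [//|b B] _ /=.
have : b \in occ_before u p i.+1 by rewrite E mem_head.
rewrite mem_occ_before => /andP [bp /eqP ub].
have [q /andP [bq qp] uq] := unm_before unm_p bp ub.
have qI : q \in occ_before u p i by rewrite mem_occ_before qp uq eqxx.
have nzI : occ_before u p i != [::] by case: (occ_before u p i) qI.
have lastI : last 0 (occ_before u p i) \in occ_before u p i.
  by case: (occ_before u p i) nzI => // a I _; rewrite /= mem_last.
split => //; last by move: lastI; rewrite mem_occ_before => /andP [].
exact: leq_trans bq (sorted_last_geq (occ_before_sorted _ _ _) qI).
Qed.

End Bracketed.

(** * Parity of the major index along the skeleton *)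

Lemma maj_std_inv_raise i u p K : unm_plus i 0 0 u = Some p ->
  all (fun a => a < K) u -> i.+2 <= K -> std u != std (set_nth 0 u p i.+1) ->
  ndes (std_inv u K) = ndes (std_inv (set_nth 0 u p i.+1) K) ->
  maj (std_inv u K) = (maj (std_inv (set_nth 0 u p i.+1) K)).+1.
Proof.
move=> unm_p uK iK std_uv; have [pu up] := unm_some unm_p.
have [Z [Eu Ev]] := std_inv_raise pu up iK; rewrite Eu Ev.
apply: maj_shift_window; rewrite ?occ_after_sorted ?occ_before_sorted //.
- by apply/allP => a; rewrite mem_occ_after => /andP [].
- by apply/allP => b; rewrite mem_occ_before => /andP [].
- case/(occ_after_bracketed unm_p) => nzC.
  by case: (occ_after u p i.+1) nzC => [|c C] //= _ -> ->.
- case/(occ_before_bracketed unm_p) => nzI; rewrite last_cat.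
  by case: (occ_before u p i) nzI => [|a I] //= _ -> ->; case: (std_inv u i).
- apply: contra std_uv; rewrite -size_eq0 size_cat => /eqP AB.
  apply/eqP/(@std_inv_inj _ _ K); rewrite ?size_raise ?all_raise //.
  by rewrite Eu Ev; case: (occ_after u p i) AB; case: (occ_before u p i.+1).
Qed.

Lemma sumn_descents_kashiwara_f i u v : kashiwara_f i u = Some v ->
  syt_of u <> syt_of v -> size (descents (syt_of u)) = size (descents (syt_of v)) ->
  sumn (descents (syt_of u)) = (sumn (descents (syt_of v))).+1.
Proof.
rewrite /kashiwara_f; case unm_p: (unm_plus i 0 0 u) => [p|] // [<-] syt_uv.
have [pu up] := unm_some unm_p.
pose K := (i + \max_(a <- u) a).+2.
have iK : i.+2 <= K by rewrite !ltnS leq_addr.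
have uK : all (fun a => a < K) u.
  apply/allP => a au; have : a <= \max_(b <- u) b by exact: leq_bigmax_seq.
  by rewrite /K; lia.
rewrite (descents_syt_of uK) (descents_syt_of (all_raise pu uK iK)).
rewrite !size_des_set !sumn_des_set; apply: maj_std_inv_raise => //.
by apply/eqP => std_uv; apply: syt_uv; rewrite /syt_of std_uv.
Qed.

Lemma size_desc_comp T : size (desc_comp T) = (size (descents T)).+1.
Proof. by rewrite size_pairmap size_rcons. Qed.

Lemma skel_adj_parity n w0 T T' : skel_adj n w0 T T' -> T <> T' ->
  size (descents T) = size (descents T') ->
  odd (sumn (descents T)) = ~~ odd (sumn (descents T')).
Proof.
case=> u [v [_ [[_ [i [_ fuv]]] [_ [[<- <-] | [<- <-]]]]]] syt_uv size_uv.
  by rewrite (sumn_descents_kashiwara_f fuv).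
by rewrite (sumn_descents_kashiwara_f fuv) ?negbK // => /esym.
Qed.

Lemma alternating_cycle_even (T : Type) (x0 : T) (b : T -> bool) (c : seq T) :
  (forall k, k < size c -> b (nth x0 c k) = ~~ b (nth x0 c (k.+1 %% size c))) ->
  ~~ odd (size c).
Proof.
move=> alt; case: (posnP (size c)) => [-> // | c0].
have parity k : k < size c -> b (nth x0 c k) = b (nth x0 c 0) (+) odd k.
  elim: k => [|k IHk] kc; first by rewrite addbF.
  have := alt k (ltnW kc); rewrite modn_small // IHk ?(ltnW kc) //.
  by move/(congr1 negb); rewrite negbK => <-; rewrite /= addbN.
have := alt (size c).-1; rewrite ltn_predL c0 prednK // modnn parity ?ltn_predL //.
move/(_ isT); rewrite -[size c](prednK c0) /=.
by case: (b _); case: (odd _).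
Qed.

Lemma nth_cycle_neq (T : eqType) (x0 : T) (c : seq T) k :
  uniq c -> 1 < size c -> k < size c -> nth x0 c k != nth x0 c (k.+1 %% size c).
Proof.
move=> uniq_c c1 kc; rewrite nth_uniq ?ltn_pmod ?(ltnW c1) //.
case: (ltngtP k.+1 (size c)) => [k1c | ck | k1c]; last 2 first.
- by move: kc; rewrite ltnNge -ltnS ck.
- by rewrite -k1c modnn; apply: contraTneq c1 => k0; rewrite -k1c k0.
by rewrite modn_small // neq_ltn ltnSn.
Qed.

Theorem proposition7p2 :
  forall (lam : seq nat), is_partition lam ->
  forall n : nat,
    (forall T : tableau, is_syt T -> tab_shape T = lam -> size (desc_comp T) <= n) ->
  forall w0 : word, word_over n w0 -> tab_shape (insertion w0) = lam ->
  forall (s : nat) (c : seq tableau),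
    3 <= size c -> uniq c ->
    (forall T, T \in c -> size (desc_comp T) = s) ->
    (forall i, i < size c ->
       skel_adj n w0 (nth [::] c i) (nth [::] c (i.+1 %% size c))) ->
    ~~ odd (size c).
Proof.
move=> lam _ n _ w0 _ _ s c c3 uniq_c size_c adj.
apply: (@alternating_cycle_even _ [::] (fun T => odd (sumn (descents T)))) => k kc.
apply: skel_adj_parity (adj k kc) _ _.
  by apply/eqP; rewrite nth_cycle_neq // (leq_trans _ c3).
by apply: succn_inj; rewrite -!size_desc_comp !size_c ?mem_nth ?ltn_pmod // (leq_trans _ c3).
Qed.
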